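(* Let $\mathcal{V}$ and $\mathcal{Q}$ be real Hilbert spaces, let $A:\mathcal{V}\times\mathcal{V}\to\mathbb{R}$ and $B:\mathcal{V}\times\mathcal{Q}\to\mathbb{R}$ be bounded bilinear forms, and let $\mathcal{V}_h\subset\mathcal{V}$, $\mathcal{Q}_h\subset\mathcal{Q}$ be finite-dimensional subspaces for which the discrete Babuška–Brezzi conditions hold (so that the discrete saddle point problems below are uniquely solvable for all right-hand sides, and the problem $A(w_h,v_h)=\ell(v_h)$ for all $v_h\in\ker\mathcal{B}_h$, $w_h\in\ker\mathcal{B}_h$, is uniquely solvable for every linear functional $\ell$ on $\ker\mathcal{B}_h$). Let $F\in\mathcal{V}'$, $G\in\mathcal{Q}'$. Let $(u_h,p_h)\in\mathcal{V}_h\times\mathcal{Q}_h$ satisfy $$A(u_h,v_h)+B(v_h,p_h)=F(v_h)\ \ \forall v_h\in\mathcal{V}_h,\qquad B(u_h,q_h)=G(q_h)\ \ \forall q_h\in\mathcal{Q}_h,$$ and for $r\in\mathcal{Q}$ let $(u_{h,r},p_{h,r})\in\mathcal{V}_h\times\mathcal{Q}_h$ satisfy $$A(u_{h,r},v_h)+B(v_h,p_{h,r})=F(v_h)+B(v_h,r)\ \ \forall v_h\in\mathcal{V}_h,\qquad B(u_{h,r},q_h)=G(q_h)\ \ \forall q_h\in\mathcal{Q}_h.$$ Then $$u_{h,r}=u_h\ \text{ for all } r\in\mathcal{Q}\quad\Longleftrightarrow\quad \ker\mathcal{B}_h\subseteq\ker\mathcal{B}.$$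
   Context: $\ker\mathcal{B}:=\{v\in\mathcal{V}: B(v,q)=0\ \forall q\in\mathcal{Q}\}$ and $\ker\mathcal{B}_h:=\{v_h\in\mathcal{V}_h: B(v_h,q_h)=0\ \forall q_h\in\mathcal{Q}_h\}$. The discrete Babuška–Brezzi conditions include the discrete inf-sup condition $\beta_h:=\inf_{q_h\in\mathcal{Q}_h}\sup_{v_h\in\mathcal{V}_h} B(v_h,q_h)/(\|v_h\|_{\mathcal{V}}\|q_h\|_{\mathcal{Q}})>0$ and an invertibility (coercivity/inf-sup) condition for $A$ on $\ker\mathcal{B}_h$. *)

From HB Require Import structures.
From mathcomp Require Import all_boot all_order all_algebra.
From mathcomp Require Import all_classical all_reals all_analysis.
Set Implicit Arguments. Unset Strict Implicit. Unset Printing Implicit Defensive.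
Import Order.TTheory GRing.Theory Num.Theory.
Import numFieldNormedType.Exports.
Local Open Scope classical_set_scope.
Local Open Scope ring_scope.

Section Defs.
Variable R : realType.

Definition hilbert_ip (V : completeNormedModType R) (ip : V -> V -> R) : Prop :=
  [/\ (forall x y, ip x y = ip y x),
      (forall a x y z, ip (a *: x + y) z = a * ip x z + ip y z) &
      (forall x, `|x| ^+ 2 = ip x x)].

Definition bilinear_form (U W : normedModType R) (A : U -> W -> R) : Prop :=
  (forall a u1 u2 w, A (a *: u1 + u2) w = a * A u1 w + A u2 w) /\
  (forall a u w1 w2, A u (a *: w1 + w2) = a * A u w1 + A u w2).

Definition bounded_bilinear (U W : normedModType R) (A : U -> W -> R) : Prop :=
  bilinear_form A /\ exists C : R, forall u w, `|A u w| <= C * `|u| * `|w|.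

Definition dual_elem (U : normedModType R) (F : U -> R) : Prop :=
  (forall a x y, F (a *: x + y) = a * F x + F y) /\ continuous F.

Definition subspace (U : normedModType R) (S : set U) : Prop :=
  S 0 /\ forall a x y, S x -> S y -> S (a *: x + y).

Definition finite_dim_subspace (U : normedModType R) (S : set U) : Prop :=
  subspace S /\
  exists s : seq U, (forall x, x \in s -> S x) /\
    forall v, S v -> exists c : 'I_(size s) -> R, v = \sum_(i < size s) c i *: s`_i.

Definition kerB (U W : normedModType R) (B : U -> W -> R) : set U :=
  [set v | forall q, B v q = 0].

Definition kerBh (U W : normedModType R) (B : U -> W -> R) (Uh : set U) (Wh : set W)
  : set U := [set v | Uh v /\ forall q, Wh q -> B v q = 0].

Definition infsup (U W : normedModType R) (B : U -> W -> R) (Uh : set U) (Wh : set W)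
  : \bar R :=
  ereal_inf [set ereal_sup [set ((B v q) / (`|v| * `|q|))%:E | v in Uh `\ 0]
            | q in Wh `\ 0].

Definition discrete_BB (V Q : normedModType R) (A : V -> V -> R) (B : V -> Q -> R)
  (Vh : set V) (Qh : set Q) : Prop :=
  (0 < infsup B Vh Qh)%E /\
  (0 < infsup (fun v w => A w v) (kerBh B Vh Qh) (kerBh B Vh Qh))%E.

End Defs.

From Pilot Require Import Defs.
From HB Require Import structures.
From mathcomp Require Import all_boot all_order all_algebra.
From mathcomp Require Import all_classical all_reals all_analysis.
Set Implicit Arguments. Unset Strict Implicit. Unset Printing Implicit Defensive.
Import Order.TTheory GRing.Theory Num.Theory.
Import numFieldNormedType.Exports.
Local Open Scope classical_set_scope.
Local Open Scope ring_scope.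

(* Testing the two discrete problems against v_h in ker B_h kills the
   multiplier terms, leaving A(u_h,v_h) = F(v_h) and
   A(u_{h,r},v_h) = F(v_h) + B(v_h,r).  So if u_{h,r} = u_h for every r, then
   B(v_h,r) = 0 for all r, i.e. v_h is in ker B.  Conversely, if ker B_h is
   contained in ker B, the difference u_{h,r} - u_h lies in ker B_h (both satisfy
   the same constraint) and A(u_{h,r} - u_h, .) vanishes on ker B_h, so the
   inf-sup condition of A on ker B_h forces it to be 0.  The Hilbert structure,
   finite dimensionality, continuity of F and G and the inf-sup condition of B
   only serve to guarantee that the discrete solutions exist, which the
   statement already assumes. *)

Section GeneralFacts.
Variable R : realType.

(* Plain [subspace] would denote MathComp-Analysis's subspace topology. *)
Lemma subspaceB (U : normedModType R) (S : set U) x y :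
  Defs.subspace S -> S x -> S y -> S (x - y).
Proof.
by move=> [_ S_lin] Sx Sy; rewrite -scaleN1r addrC; apply: S_lin.
Qed.

Lemma bilinear_formBl (U W : normedModType R) (C : U -> W -> R) u1 u2 w :
  bilinear_form C -> C (u1 - u2) w = C u1 w - C u2 w.
Proof.
by move=> [C_linl _]; rewrite -scaleN1r addrC C_linl mulN1r addrC.
Qed.

Lemma kerBh_sub (U W : normedModType R) (C : U -> W -> R) (Uh : set U)
    (Wh : set W) u1 u2 :
  bilinear_form C -> Defs.subspace Uh -> Uh u1 -> Uh u2 ->
  (forall q, Wh q -> C u1 q = C u2 q) -> kerBh C Uh Wh (u1 - u2).
Proof.
move=> hC hUh Uu1 Uu2 Ceq; split; first exact: subspaceB.
by move=> q Wq; rewrite bilinear_formBl // Ceq // subrr.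
Qed.

Lemma infsup_gt0_eq0 (U W : normedModType R) (C : U -> W -> R) (Uh : set U)
    (Wh : set W) w :
  (0 < infsup C Uh Wh)%E -> Wh w -> (forall v, Uh v -> C v w = 0) -> w = 0.
Proof.
move=> /lt_geF infsup_pos Ww Cw0; apply/eqP; apply: contraT => w_neq0.
rewrite -infsup_pos; apply: le_trans; first apply: ereal_inf_lbound.
  by exists w => //; split => //= /eqP; rewrite (negbTE w_neq0).
by apply: ge_ereal_sup => _ /= [v [Uv _] <-]; rewrite Cw0 // mul0r.
Qed.

End GeneralFacts.

Section ShiftedSaddlePoint.
Variables (R : realType) (V Q : normedModType R).
Variables (A : V -> V -> R) (B : V -> Q -> R) (Vh : set V) (Qh : set Q).
Variables (F : V -> R) (G : Q -> R).
Variables (uh : V) (ph : Q) (ur : Q -> V) (pr : Q -> Q).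
Hypotheses (hph : Qh ph) (hpr : forall r, Qh (pr r)).
Hypothesis eq1 : forall vh, Vh vh -> A uh vh + B vh ph = F vh.
Hypothesis eq1r : forall r vh, Vh vh -> A (ur r) vh + B vh (pr r) = F vh + B vh r.

Lemma shifted_solution_on_kerBh r v :
  kerBh B Vh Qh v -> A (ur r) v = A uh v + B v r.
Proof.
move=> [Vv Bv0]; have := eq1r r Vv; have := eq1 Vv.
by rewrite (Bv0 _ hph) (Bv0 _ (hpr r)) !addr0 => ->.
Qed.

End ShiftedSaddlePoint.

Theorem lemma4p2 (R : realType) (V Q : completeNormedModType R)
  (ipV : V -> V -> R) (ipQ : Q -> Q -> R)
  (hV : hilbert_ip ipV) (hQ : hilbert_ip ipQ)
  (A : V -> V -> R) (B : V -> Q -> R)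
  (hA : bounded_bilinear A) (hB : bounded_bilinear B)
  (Vh : set V) (Qh : set Q)
  (hVh : finite_dim_subspace Vh) (hQh : finite_dim_subspace Qh)
  (hBB : discrete_BB A B Vh Qh)
  (F : V -> R) (G : Q -> R) (hF : dual_elem F) (hG : dual_elem G)
  (uh : V) (ph : Q) (huh : Vh uh) (hph : Qh ph)
  (eq1 : forall vh, Vh vh -> A uh vh + B vh ph = F vh)
  (eq2 : forall qh, Qh qh -> B uh qh = G qh)
  (ur : Q -> V) (pr : Q -> Q)
  (hur : forall r, Vh (ur r)) (hpr : forall r, Qh (pr r))
  (eq1r : forall r vh, Vh vh -> A (ur r) vh + B vh (pr r) = F vh + B vh r)
  (eq2r : forall r qh, Qh qh -> B (ur r) qh = G qh) :
  (forall r, ur r = uh) <-> kerBh B Vh Qh `<=` kerB B.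
Proof.
have [A_bil _] := hA; have [B_bil _] := hB.
have on_kerBh := shifted_solution_on_kerBh hph hpr eq1 eq1r.
split=> [ur_eq_uh v Kv r | kerBh_sub_kerB r].
  have := on_kerBh r v Kv.
  by rewrite ur_eq_uh -{1}[A uh v]addr0 => /addrI/esym.
have ker_diff : kerBh B Vh Qh (ur r - uh).
  by apply: kerBh_sub B_bil hVh.1 (hur r) huh _ => q Qq; rewrite eq2r // eq2.
apply/eqP; rewrite -subr_eq0; apply/eqP.
apply: (infsup_gt0_eq0 hBB.2 ker_diff) => v Kv /=.
rewrite (bilinear_formBl _ _ _ A_bil) (on_kerBh r v Kv).
by rewrite (kerBh_sub_kerB v Kv r) addr0 subrr.
Qed.
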